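(* If $n>0$ then $v_{2l-1}=v_{2l}=l$ for all $l=1,\dots,n$.
   Context: $k$ is a field of characteristic zero, $\mathcal O_n=k[x]/(x^{n+1})$, elements of $\mathcal O_n$ identified with multiplication operators, $\operatorname{ad}_x(\delta)=x\delta-\delta x$. The order filtration is $\mathcal D^p(\mathcal O_n)=\{\delta\in\operatorname{End}_k(\mathcal O_n):[f_0,[f_1,\dots,[f_p,\delta]\dots]]=0\ \forall f_i\in\mathcal O_n\}$. For $\delta\in\mathcal D^p(\mathcal O_n)$, $\operatorname{ad}_x^p(\delta)$ is multiplication by an element of $\mathcal O_n$ and $\operatorname{ad}_x^p:\mathcal D^p(\mathcal O_n)\to\mathcal O_n$ is $\mathcal O_n$-linear, so its image is an ideal $(x^{v_p})$ of $\mathcal O_n$; $v_p\in\{0,\dots,n\}$ denotes the corresponding exponent. *)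

From HB Require Import structures.
From mathcomp Require Import all_boot all_order all_algebra.
Set Implicit Arguments. Unset Strict Implicit. Unset Printing Implicit Defensive.
Import GRing.Theory.
Local Open Scope ring_scope.

(* O_n = k[x]/(x^(n+1)) is identified with k^(n+1) via the basis
   1, x, ..., x^n; End_k(O_n) is then 'M[k]_(n.+1) (acting on column
   vectors, so composition is matrix product). *)

Definition xmul (k : fieldType) (n : nat) : 'M[k]_(n.+1) :=
  \matrix_(i, j) (i == j.+1 :> nat)%:R.

Definition mulop (k : fieldType) (n : nat) (f : {poly k}) : 'M[k]_(n.+1) :=
  horner_mx (xmul k n) f.

Definition commr (k : fieldType) (n : nat) (a d : 'M[k]_(n.+1)) : 'M[k]_(n.+1) :=
  a * d - d * a.

Definition iter_comm (k : fieldType) (n : nat) (fs : seq {poly k})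
    (d : 'M[k]_(n.+1)) : 'M[k]_(n.+1) :=
  foldr (fun f e => @commr k n (@mulop k n f) e) d fs.

Definition in_Dp (k : fieldType) (n p : nat) (d : 'M[k]_(n.+1)) : Prop :=
  forall fs : (p.+1).-tuple {poly k}, @iter_comm k n fs d = 0.

Definition adx (k : fieldType) (n : nat) (d : 'M[k]_(n.+1)) : 'M[k]_(n.+1) :=
  @commr k n (xmul k n) d.

(* "v_p = v": the image ad_x^p(D^p(O_n)) is exactly the ideal (x^v) of O_n,
   i.e. the set of multiplication operators by elements x^v * g. *)
Definition vp_is (k : fieldType) (n p v : nat) : Prop :=
  forall A : 'M[k]_(n.+1),
    (exists2 d, @in_Dp k n p d & iter p (@adx k n) d = A) <->
    (exists g : {poly k}, A = @mulop k n ('X ^+ v * g)).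

(* O_n is the irreducible (n+1)-dimensional sl2-module: e acts as
   multiplication by x, f as x^j |-> j (n + 1 - j) x^(j-1) and h as
   x^i |-> (2i - n) x^i.  Through commutators End(O_n) is an sl2-module on
   which ad_x is the raising operator, and the endomorphisms of degree d
   (sending each x^j into k x^(j+d)) form its weight space of weight 2d.
   Moreover D^p(O_n) is the kernel of ad_x^(p+1), so ad_x^p(D^p) consists of
   operators commuting with x, i.e. of multiplication operators.
   If p >= 2l - 1, the coefficient of x^m in ad_x^p(d) only depends on the
   degree m - p part of d, a vector of weight -2(p - m) killed by
   ad_x^(p+1); for m < l we have p + 1 <= 2(p - m), and in an sl2-module on
   which f is nilpotent such a vector vanishes.  Conversely x^l is a highest
   weight vector of weight 2l, so ad_x^(2l) ad_f^(2l) x^l is a nonzero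
   multiple of x^l; if p <= 2l, g ad_x^(2l-p) ad_f^(2l) x^l is then an
   element of D^p whose image under ad_x^p is a nonzero multiple of g x^l. *)

From HB Require Import structures.
From mathcomp Require Import all_boot all_order all_algebra.
From mathcomp Require Import zify ring.
Set Implicit Arguments. Unset Strict Implicit. Unset Printing Implicit Defensive.
Import GRing.Theory.
Local Open Scope ring_scope.

Section IterLinear.
Variables (R : pzRingType) (V : lmodType R) (f : {linear V -> V}).

Lemma iter_linearZ j c v : iter j f (c *: v) = c *: iter j f v.
Proof. by elim: j => //= j ->; rewrite linearZZ. Qed.

Lemma iter_linear0 j : iter j f 0 = 0.
Proof. by elim: j => //= j ->; rewrite linear0. Qed.

End IterLinear.

(** * Representations of sl2 *)

Section Sl2Triple.
Variables (k : fieldType) (V : lmodType k) (E F H : {linear V -> V}).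
Hypothesis EF_FE : forall v, E (F v) = F (E v) + H v.
Hypothesis HE_EH : forall v, H (E v) = E (H v) + 2%:R *: E v.
Hypothesis HF_FH : forall v, H (F v) = F (H v) - 2%:R *: F v.

Lemma weight_iterE v mu j : H v = mu *: v ->
  H (iter j E v) = (mu + (2 * j)%N%:R) *: iter j E v.
Proof.
move=> Hv; elim: j => [|j IH] /=; first by rewrite addr0.
by rewrite HE_EH IH linearZZ -scalerDl; congr (_ *: _); rewrite mulnS natrD; ring.
Qed.

Lemma weight_iterF v mu j : H v = mu *: v ->
  H (iter j F v) = (mu - (2 * j)%N%:R) *: iter j F v.
Proof.
move=> Hv; elim: j => [|j IH] /=; first by rewrite subr0.
by rewrite HF_FH IH linearZZ -scalerBl; congr (_ *: _); rewrite mulnS natrD; ring.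
Qed.

Lemma iterE_F v mu q : H v = mu *: v ->
  iter q.+1 E (F v) = F (iter q.+1 E v) + (q.+1%:R * (mu + q%:R)) *: iter q E v.
Proof.
move=> Hv; elim: q => [|q IH]; first by rewrite /= EF_FE Hv mul1r addr0.
rewrite iterS IH linearD EF_FE (weight_iterE _ Hv) linearZZ -addrA -scalerDl.
by congr (_ + _ *: _); rewrite natrM !mulrS; ring.
Qed.

Lemma E_iterF v mu j : E v = 0 -> H v = mu *: v ->
  E (iter j.+1 F v) = (j.+1%:R * (mu - j%:R)) *: iter j F v.
Proof.
move=> Ev Hv; elim: j => [|j IH].
  by rewrite /= EF_FE Ev linear0 add0r Hv mul1r subr0.
rewrite iterS EF_FE IH linearZZ -iterS (weight_iterF _ Hv) -scalerDl.
by congr (_ *: _); rewrite natrM !mulrS; ring.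
Qed.

Hypothesis char0 : [pchar k] =i pred0.

Lemma char0_natr_neq0 m : (0 < m)%N -> (m%:R : k) != 0.
Proof. by move: char0 => /pcharf0P ->; rewrite -lt0n. Qed.

Lemma highest_weight_iterEF v N j : E v = 0 -> H v = N%:R *: v -> (j <= N)%N ->
  exists2 c : k, c != 0 & iter j E (iter j F v) = c *: v.
Proof.
move=> Ev Hv; elim: j => [|j IH] ltjN; first by exists 1; rewrite ?oner_neq0 ?scale1r.
have [c c0 Hc] := IH (ltnW ltjN).
exists (j.+1%:R * (N%:R - j%:R) * c); last first.
  by rewrite iterSr (E_iterF _ Ev Hv) iter_linearZ Hc scalerA.
rewrite !mulf_neq0 // ?char0_natr_neq0 // -natrB ?(ltnW ltjN) //.
by rewrite char0_natr_neq0 ?subn_gt0.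
Qed.

(* With F v = 0, iterE_F reads E^(q+1) (F v) = (q + 1) (q - m) E^q v, and
   the coefficient does not vanish for q < m. *)
Lemma lowest_weight_vanish v m q : F v = 0 -> H v = - m%:R *: v ->
  iter q E v = 0 -> (q <= m)%N -> v = 0.
Proof.
move=> Fv Hv; elim: q => [//|q IH] Eq ltqm; apply: IH (ltnW ltqm).
have := iterE_F q Hv; rewrite Fv iter_linear0 Eq linear0 add0r.
move/esym/eqP; rewrite scaler_eq0 => /orP[|/eqP //].
rewrite mulf_eq0 (negbTE (char0_natr_neq0 _)) //= addrC -opprB -natrB ?(ltnW ltqm) //.
by rewrite oppr_eq0 (negbTE (char0_natr_neq0 _)) ?subn_gt0.
Qed.

Lemma weight_vanish v r m q : iter r F v = 0 -> H v = - m%:R *: v ->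
  iter q E v = 0 -> (q <= m)%N -> v = 0.
Proof.
elim: r v m q => [//|r IH] v m q Fv Hv Eq leqm.
apply: (lowest_weight_vanish _ Hv Eq leqm).
apply: (IH _ m.+2 q.+1); first by rewrite -iterSr.
- by rewrite HF_FH Hv linearZZ -scalerBl -opprD -natrD addn2.
- by rewrite (iterE_F q Hv) iterS Eq !linear0 addr0.
- by rewrite ltnS ltnW.
Qed.

End Sl2Triple.

Section Commutator.
Variables (k : fieldType) (n : nat).
Local Notation mx := 'M[k]_n.+1.
Implicit Types A B C G M : mx.

Lemma commr_is_linear A : linear (commr A).
Proof.
move=> c M N; rewrite /commr mulrDr mulrDl -scalerAr -scalerAl.
by rewrite opprD addrACA scalerBr.
Qed.

HB.instance Definition _ A :=
  GRing.isLinear.Build k mx mx *:%R (commr A) (commr_is_linear A).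
HB.instance Definition _ := GRing.Linear.copy (@adx k n) (commr (xmul k n)).

Lemma commrE A M i j : commr A M i j = (A * M) i j - (M * A) i j.
Proof. by rewrite [LHS]mxE [X in _ + X]mxE. Qed.

Lemma commrZl c A M : commr (c *: A) M = c *: commr A M.
Proof. by rewrite /commr scalerBr scalerAl scalerAr. Qed.

Lemma commr_eq0 A M : (commr A M == 0) = (A * M == M * A).
Proof. exact: subr_eq0. Qed.

Lemma commr_jacobi A B M :
  commr A (commr B M) = commr B (commr A M) + commr (commr A B) M.
Proof.
apply/eqP; rewrite addrC -subr_eq; apply/eqP.
rewrite /commr !mulrBr !mulrBl !mulrA.
set a := A * B * M; set b := A * M * B; set c := B * M * A.
set d := M * B * A; set e := B * A * M; set f := M * A * B.
by rewrite !opprB !addrA (addrAC (a - b + d) _ b) (addrAC (a - b) d b) subrK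
  (addrAC (a + d - c) _ c) subrK (addrAC (a + d)) (addrAC a d).
Qed.

Lemma commrM A B C : commr A (B * C) = commr A B * C + B * commr A C.
Proof. by rewrite /commr mulrBl mulrBr !mulrA addrA subrK. Qed.

Lemma iter_commr_mull A G M j : commr A G = 0 ->
  iter j (commr A) (G * M) = G * iter j (commr A) M.
Proof. by move=> AG; elim: j => //= j ->; rewrite commrM AG mul0r add0r. Qed.

End Commutator.

Section TruncatedPolynomials.
Variables (k : fieldType) (n : nat).
Local Notation mx := 'M[k]_n.+1.
Local Notation X := (xmul k n).
Implicit Types (A G M N : mx) (f g : {poly k}).

(** * The sl2-triple (X, sl2f, sl2h) *)

Definition sl2f : mx :=
  \matrix_(i, j) ((i.+1 == j :> nat)%:R * (j * (n.+1 - j))%N%:R).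
Definition sl2h : mx := \matrix_(i, j) ((i == j :> nat)%:R * ((2 * i)%N%:R - n%:R)).

Lemma sum_nat_delta (F : 'I_n.+1 -> k) (s : nat) :
  \sum_(r < n.+1) (r == s :> nat)%:R * F r =
    if (s < n.+1)%N then F (inord s) else 0.
Proof.
case: ifP => lts.
  rewrite (bigD1 (inord s)) //= inordK // eqxx mul1r big1 ?addr0 // => r rs.
  rewrite (_ : (r == s :> nat) = false) ?mul0r //.
  by apply: contraNF rs => /eqP <-; rewrite inord_val.
rewrite big1 // => r _; case: eqP => [rs|]; last by rewrite mul0r.
by have := ltn_ord r; rewrite rs lts.
Qed.

Lemma mulmx_row_delta M N i j (s : nat) (c : k) :
  (forall r, M i r = (r == s :> nat)%:R * c) ->
  (M * N) i j = if (s < n.+1)%N then c * N (inord s) j else 0.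
Proof.
move=> Mi; rewrite -mulmxE mxE -(sum_nat_delta (fun r => c * N r j)).
by apply: eq_bigr => r _; rewrite Mi mulrA.
Qed.

Lemma mulmx_col_delta M N i j (s : nat) (c : k) :
  (forall r, N r j = (r == s :> nat)%:R * c) ->
  (M * N) i j = if (s < n.+1)%N then M i (inord s) * c else 0.
Proof.
move=> Nj; rewrite -mulmxE mxE -(sum_nat_delta (fun r => M i r * c)).
by apply: eq_bigr => r _; rewrite Nj mulrCA.
Qed.

(* In the next four lemmas the factors (0 < i), (j < n), (n - i) and j
   vanish exactly when the [inord] index falls out of range. *)
Lemma xmul_mulE M i j : (X * M) i j = (0 < i)%N%:R * M (inord i.-1) j.
Proof.
rewrite (@mulmx_row_delta _ _ _ _ i.-1 (0 < i)%N%:R)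
  ?(leq_ltn_trans (leq_pred i)) // => r.
by rewrite mxE; case: (nat_of_ord i) => [|i'] /=; rewrite ?mulr0 // eq_sym mulr1.
Qed.

Lemma mul_xmulE M i j : (M * X) i j = (j < n)%N%:R * M i (inord j.+1).
Proof.
rewrite (@mulmx_col_delta _ _ _ _ j.+1 1) => [|r]; last by rewrite mxE mulr1.
by rewrite ltnS; case: ltnP => _; rewrite ?mulr1 ?mul1r ?mul0r.
Qed.

Lemma sl2f_mulE M i j :
  (sl2f * M) i j = (i.+1 * (n - i))%N%:R * M (inord i.+1) j.
Proof.
rewrite (@mulmx_row_delta _ _ _ _ i.+1 (i.+1 * (n - i))%N%:R) => [|r].
  by rewrite ltnS; case: leqP => // lein; rewrite (eqP lein) muln0 mul0r.
by rewrite mxE eq_sym; case: eqP => [->|]; rewrite ?subSS ?mul0r.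
Qed.

Lemma mul_sl2fE M i j :
  (M * sl2f) i j = M i (inord j.-1) * (j * (n.+1 - j))%N%:R.
Proof.
rewrite (@mulmx_col_delta _ _ _ _ j.-1 (j * (n.+1 - j))%N%:R)
  ?(leq_ltn_trans (leq_pred j)) // => r.
rewrite mxE; case: (nat_of_ord j) => [|j'] /=; first by rewrite !mul0n !mulr0.
by rewrite eqSS.
Qed.

Lemma sl2h_mulE M i j : (sl2h * M) i j = ((2 * i)%N%:R - n%:R) * M i j.
Proof.
rewrite (@mulmx_row_delta _ _ _ _ i ((2 * i)%N%:R - n%:R)) ?ltn_ord ?inord_val // => r.
by rewrite mxE eq_sym.
Qed.

Lemma mul_sl2hE M i j : (M * sl2h) i j = M i j * ((2 * j)%N%:R - n%:R).
Proof.
rewrite (@mulmx_col_delta _ _ _ _ j ((2 * j)%N%:R - n%:R)) ?ltn_ord ?inord_val // => r.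
by rewrite mxE; case: eqP => [->|]; rewrite ?mul0r.
Qed.

Lemma adxE M i j :
  adx M i j = (0 < i)%N%:R * M (inord i.-1) j - (j < n)%N%:R * M i (inord j.+1).
Proof. by rewrite commrE xmul_mulE mul_xmulE. Qed.

Lemma commr_sl2fE M i j : commr sl2f M i j =
  (i.+1 * (n - i))%N%:R * M (inord i.+1) j - M i (inord j.-1) * (j * (n.+1 - j))%N%:R.
Proof. by rewrite commrE sl2f_mulE mul_sl2fE. Qed.

Lemma commr_sl2hE M i j :
  commr sl2h M i j = ((2 * i)%N%:R - (2 * j)%N%:R) * M i j.
Proof.
by rewrite commrE sl2h_mulE mul_sl2hE [M i j * _]mulrC -mulrBl opprB addrA subrK.
Qed.

Lemma sl2fE i j : sl2f i j = (i.+1 == j :> nat)%:R * (j * (n.+1 - j))%N%:R.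
Proof. by rewrite mxE. Qed.

Lemma commr_xmul_sl2f : commr X sl2f = sl2h.
Proof.
apply/matrixP => i j; rewrite commrE xmul_mulE mul_xmulE [sl2h _ _]mxE.
have -> : (0 < i)%N%:R * sl2f (inord i.-1) j =
          (i == j :> nat)%:R * (j * (n.+1 - j))%N%:R.
  case: i => [[|i] lti] /=; last by rewrite mul1r sl2fE inordK // ltnW.
  by rewrite mul0r; case: eqP => [<-|]; rewrite ?mul0n ?mulr0 ?mul0r.
have -> : (j < n)%N%:R * sl2f i (inord j.+1) =
          (i == j :> nat)%:R * (j.+1 * (n - j))%N%:R.
  rewrite sl2fE; case: ltnP => [ltjn|lenj]; first by rewrite inordK ?mul1r ?eqSS.
  by move: lenj; rewrite -subn_eq0 => /eqP ->; rewrite mul0r muln0 mulr0.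
case: eqP => [->|]; last by rewrite !mul0r subrr.
have lejn : (j <= n)%N by rewrite -ltnS.
rewrite !mul1r !natrM (natrB _ (leqW lejn)) (natrB _ lejn) !mulrS.
ring.
Qed.

Lemma commr_sl2h_xmul : commr sl2h X = 2%:R *: X.
Proof.
apply/matrixP => i j; rewrite commr_sl2hE !mxE.
case: eqP => [->|]; last by rewrite !mulr0.
by rewrite mulnS natrD addrK.
Qed.

Lemma commr_sl2h_sl2f : commr sl2h sl2f = - 2%:R *: sl2f.
Proof.
apply/matrixP => i j; rewrite commr_sl2hE [in RHS]mxE sl2fE mulrA.
case: eqP => [ij|_]; last by rewrite !(mulr0, mul0r).
by rewrite -ij mulnS natrD mulrA; congr (_ * _ * _); ring.
Qed.

Lemma adx_commr_sl2f M :
  adx (commr sl2f M) = commr sl2f (adx M) + commr sl2h M.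
Proof. by rewrite /adx commr_jacobi commr_xmul_sl2f. Qed.

Lemma commr_sl2h_adx M :
  commr sl2h (adx M) = adx (commr sl2h M) + 2%:R *: adx M.
Proof. by rewrite /adx commr_jacobi commr_sl2h_xmul commrZl. Qed.

Lemma commr_sl2h_commr_sl2f M :
  commr sl2h (commr sl2f M) = commr sl2f (commr sl2h M) - 2%:R *: commr sl2f M.
Proof. by rewrite commr_jacobi commr_sl2h_sl2f commrZl scaleNr. Qed.

(** * The grading of End(O_n) by degree *)

(* The entry (i, j) sends x^j to x^i and thus has degree i - j; [deg_part r]
   is the part of degree r - n, i.e. the weight space of weight 2(r - n). *)
Definition deg_part r M : mx := \matrix_(i, j) ((i + (n - j) == r)%N%:R * M i j).

Lemma deg_partE r M i j : deg_part r M i j = (i + (n - j) == r)%N%:R * M i j.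
Proof. by rewrite mxE. Qed.

Lemma deg_part0 r : deg_part r 0 = 0.
Proof. by apply/matrixP => i j; rewrite deg_partE !mxE mulr0. Qed.

Lemma deg_part_adx r M : deg_part r.+1 (adx M) = adx (deg_part r M).
Proof.
apply/matrixP => i j.
rewrite deg_partE (adxE M) (adxE (deg_part r M)) !deg_partE mulrBr; congr (_ - _).
  case: i => [[|i] lti] /=; first by rewrite !mul0r mulr0.
  by rewrite (inordK (ltnW lti)) mulr1n !mul1r addSn eqSS.
case: ltnP => [ltjn|_]; last by rewrite !mul0r mulr0.
by rewrite inordK // mulr1n !mul1r -(subnSK ltjn) addnS eqSS.
Qed.

Lemma deg_part0_adx M : deg_part 0 (adx M) = 0.
Proof.
apply/matrixP => i j; rewrite deg_partE adxE [RHS]mxE.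
case: i => [[|i] lti]; last by rewrite addSn mul0r.
rewrite add0n subn_eq0 mul0r sub0r; case: leqP => [lenj|_]; last by rewrite mul0r.
by rewrite mul1r mul0r oppr0.
Qed.

Lemma deg_part_iter_adx s p M : deg_part s (iter p (@adx k n) M) =
  if (p <= s)%N then iter p (@adx k n) (deg_part (s - p)%N M) else 0.
Proof.
elim: p s => [|p IH] [|s] //=; rewrite ?deg_part0_adx // deg_part_adx IH ltnS subSS.
by case: ifP => // _; rewrite linear0.
Qed.

Lemma commr_sl2f_deg_part r M :
  commr sl2f (deg_part r.+1 M) = deg_part r (commr sl2f M).
Proof.
apply/matrixP => i j; rewrite [RHS]deg_partE !commr_sl2fE !deg_partE mulrBr.
congr (_ - _).
  case: (ltnP i n) => [ltin|lein]; last first.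
    by move: lein; rewrite -subn_eq0 => /eqP ->; rewrite muln0 !mul0r mulr0.
  by rewrite inordK // addSn eqSS mulrCA.
case: j => [[|j] ltjn] /=; first by rewrite !mulr0.
rewrite ltnS in ltjn.
by rewrite (inordK (ltnW ltjn)) -(subnSK ltjn) addnS eqSS mulrA.
Qed.

Lemma commr_sl2f_deg_part0 M : commr sl2f (deg_part 0 M) = 0.
Proof.
apply/matrixP => i j; rewrite commr_sl2fE !deg_partE mxE.
have -> : (i.+1 * (n - i))%N%:R *
    ((@inord n i.+1 + (n - j) == 0)%N%:R * M (inord i.+1) j) = 0.
  case: (ltnP i n) => [ltin|lein]; first by rewrite inordK // mul0r mulr0.
  by move: lein; rewrite -subn_eq0 => /eqP ->; rewrite muln0 mul0r.
case: j => [[|j] ltjn] /=; first by rewrite !mulr0 subrr.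
rewrite ltnS in ltjn.
by rewrite (inordK (ltnW ltjn)) -(subnSK ltjn) addnS !mul0r subrr.
Qed.

Lemma iter_sl2f_deg_part r M : iter r.+1 (commr sl2f) (deg_part r M) = 0.
Proof.
elim: r M => [|r IH] M; first exact: commr_sl2f_deg_part0.
by rewrite iterSr commr_sl2f_deg_part IH.
Qed.

Lemma commr_sl2h_deg_part r M :
  commr sl2h (deg_part r M) = ((2 * r)%N%:R - (2 * n)%N%:R) *: deg_part r M.
Proof.
apply/matrixP => i j; rewrite commr_sl2hE [in RHS]mxE !deg_partE.
case: eqP => [<-|_]; last by rewrite !(mul0r, mulr0).
have lejn : (j <= n)%N by rewrite -ltnS.
by rewrite !natrM natrD (natrB _ lejn); congr (_ * _); ring.
Qed.

Lemma commr_xmul_mulop f : commr X (mulop n f) = 0.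
Proof.
apply/eqP; rewrite commr_eq0 -!mulmxE; apply/eqP/esym.
exact: comm_horner_mx.
Qed.

Lemma commr_mulop_eq0 f M : adx M = 0 -> commr (mulop n f) M = 0.
Proof.
move/eqP; rewrite commr_eq0 -!mulmxE => /eqP XM.
by apply/eqP; rewrite commr_eq0 -!mulmxE; apply/eqP/comm_horner_mx.
Qed.

Lemma iter_adx_commr_mulop f M j :
  iter j (@adx k n) (commr (mulop n f) M) = commr (mulop n f) (iter j (@adx k n) M).
Proof.
elim: j => //= j ->; rewrite /adx commr_jacobi commr_xmul_mulop.
by rewrite /commr mul0r mulr0 subrr addr0.
Qed.

Lemma iter_comm_vanish (fs : seq {poly k}) M q :
  iter (q + size fs) (@adx k n) M = 0 -> iter q (@adx k n) (iter_comm fs M) = 0.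
Proof.
elim: fs q => [|f fs IH] q; first by rewrite addn0.
rewrite addnS -addSn => /IH /= vanish.
by rewrite iter_adx_commr_mulop commr_mulop_eq0 // -iterS.
Qed.

Lemma in_DpP p M : in_Dp p M <-> iter p.+1 (@adx k n) M = 0.
Proof.
split=> [DpM|vanish fs]; last first.
  by apply: (iter_comm_vanish (q := 0)); rewrite size_tuple.
have nseqX m : iter_comm (nseq m 'X) M = iter m (@adx k n) M.
  by elim: m => //= m ->; rewrite /mulop horner_mx_X.
by rewrite -nseqX; apply: (DpM (Tuple (nseq_tupleP p.+1 'X))).
Qed.

Lemma mulopE f i j : mulop n f i j = (j <= i)%N%:R * f`_(i - j).
Proof.
elim/poly_ind: f i j => [|f c IH] i j.
  by rewrite /mulop rmorph0 mxE coef0 mulr0.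
rewrite /mulop rmorphD rmorphM /= horner_mx_X horner_mx_C [LHS]mxE.
rewrite mul_xmulE IH mxE coefD coefMX coefC.
have -> : (j < n)%N%:R * ((@inord n j.+1 <= i)%N%:R * f`_(i - @inord n j.+1)) =
          (j < i)%N%:R * f`_(i - j.+1).
  case: (ltnP j n) => [ltjn|lenj]; first by rewrite inordK // mul1r.
  by rewrite (leq_gtF (leq_trans (leq_ord i) lenj)) !mul0r.
rewrite -[i == j](inj_eq val_inj) /=.
case: (ltngtP i j) => [ltij|ltji|eqij].
- by rewrite !mul0r mulr0n addr0.
- by rewrite mulr0n addr0 !mul1r subn_eq0 leqNgt ltji /= subnS addr0.
- by rewrite eqij subnn !mul0r mul1r mulr1n !add0r.
Qed.

Lemma xmulXE j i r : (X ^+ j) i r = (i == r + j :> nat)%N%:R.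
Proof.
elim: j r => [|j IH] r; first by rewrite expr0 mxE addn0.
rewrite exprSr mul_xmulE IH; case: (ltnP r n) => [ltrn|lenr].
  by rewrite inordK // mul1r addSnnS.
rewrite mul0r; case: eqP => // eq_i; have := leq_ord i.
by rewrite eq_i -addSnnS ltnNge (leq_trans lenr) ?leq_addr.
Qed.

Lemma xmulXE_row j i r :
  (X ^+ j) i r = (r == i - j :> nat)%N%:R * (j <= i)%N%:R.
Proof.
rewrite xmulXE; case: (leqP j i) => [leji|ltij].
  rewrite mulr1; congr (nat_of_bool _)%:R.
  by apply/idP/idP => /eqP ->; rewrite ?addnK ?subnK.
by rewrite mulr0 (ltn_eqF (leq_trans ltij (leq_addl r j))).
Qed.

(* Column j of A is A X^j e_0 = X^j A e_0. *)
Lemma adx_eq0_entry A i j :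
  adx A = 0 -> A i j = (j <= i)%N%:R * A (inord (i - j)) ord0.
Proof.
move/eqP; rewrite commr_eq0 => /eqP /commr_sym /(commrX j) AXj.
have -> : A i j = (A * X ^+ j) i ord0.
  rewrite (@mulmx_col_delta _ _ _ _ j 1) ?ltn_ord ?inord_val ?mulr1 // => r.
  by rewrite xmulXE mulr1.
rewrite AXj (@mulmx_row_delta _ _ _ _ (i - j) (j <= i)%N%:R) => [|r].
  by rewrite (leq_ltn_trans (leq_subr j i)) ?ltn_ord.
exact: xmulXE_row.
Qed.

Lemma adx_eq0_mulop A :
  adx A = 0 -> A = mulop n (\poly_(i < n.+1) A (inord i) ord0).
Proof.
move=> XA; apply/matrixP => i j; rewrite mulopE coef_poly (adx_eq0_entry _ _ XA).
by rewrite (leq_ltn_trans (leq_subr j i)) ?ltn_ord.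
Qed.

Lemma iter_adx_mull G M j :
  commr X G = 0 -> iter j (@adx k n) (G * M) = G * iter j (@adx k n) M.
Proof. exact: iter_commr_mull. Qed.

Lemma mulop_XnM l g : mulop n ('X^l * g) = mulop n g * X ^+ l.
Proof. by rewrite mulrC /mulop rmorphM rmorphXn /= horner_mx_X. Qed.

Lemma adx_xmulX l : adx (X ^+ l) = 0.
Proof. by rewrite /adx /commr -exprS -exprSr subrr. Qed.

Lemma commr_sl2h_xmulX l : commr sl2h (X ^+ l) = (2 * l)%N%:R *: X ^+ l.
Proof.
elim: l => [|l IH]; first by rewrite expr0 /commr mulr1 mul1r subrr scale0r.
rewrite exprSr commrM IH commr_sl2h_xmul -scalerAl -scalerAr -scalerDl.
by rewrite mulnS natrD addrC.
Qed.

(** * The image of D^p under ad_x^p *)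

Hypothesis char0 : [pchar k] =i pred0.

Lemma deg_part_vanish r q M : iter q (@adx k n) (deg_part r M) = 0 ->
  (q + 2 * r <= 2 * n)%N -> deg_part r M = 0.
Proof.
move=> Eq leq2n; have lern : (r <= n)%N by lia.
apply: (weight_vanish adx_commr_sl2f commr_sl2h_adx commr_sl2h_commr_sl2f char0
  (iter_sl2f_deg_part r M) (m := (2 * (n - r))%N) _ Eq); last by lia.
by rewrite /= commr_sl2h_deg_part -opprB -natrB ?leq_mul2l ?lern // -mulnBr.
Qed.

Lemma iter_adx_onto_xmulX l : exists d, iter (2 * l) (@adx k n) d = X ^+ l.
Proof.
have [c c0 Ec] := highest_weight_iterEF adx_commr_sl2f commr_sl2h_commr_sl2f char0
  (adx_xmulX l) (commr_sl2h_xmulX l) (leqnn _).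
exists (c^-1 *: iter (2 * l) (commr sl2f) (X ^+ l)).
by rewrite iter_linearZ Ec scalerA mulVf // scale1r.
Qed.

Lemma iter_adx_Dp_sub p l M : (2 * l - 1 <= p)%N -> in_Dp p M ->
  exists g, iter p (@adx k n) M = mulop n ('X^l * g).
Proof.
move=> lep /in_DpP DpM; set B := iter p _ M.
have col0 m : (m < l)%N -> (m < n.+1)%N -> B (inord m) ord0 = 0.
  move=> ltml ltmn.
  have -> : B (inord m) ord0 = deg_part (m + n) B (inord m) ord0.
    by rewrite deg_partE inordK // subn0 eqxx mul1r.
  rewrite deg_part_iter_adx; case: ifP => [lepmn|_]; last by rewrite mxE.
  rewrite (@deg_part_vanish _ p.+1) ?iter_linear0 ?mxE //; last by lia.
  have := deg_part_iter_adx (m + n).+1 p.+1 M.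
  by rewrite DpM deg_part0 ltnS lepmn subSS.
set f := \poly_(i < n.+1) B (inord i) ord0.
have take_f : take_poly l f = 0.
  apply/polyP => i; rewrite coef_take_poly coef_poly coef0.
  by case: ifP => // ltil; case: ifP => // ltin; apply: col0.
exists (drop_poly l f).
by rewrite {1}(@adx_eq0_mulop B DpM) -/f -{1}(poly_take_drop l f) take_f add0r mulrC.
Qed.

Lemma iter_adx_Dp_sup p l g : (p <= 2 * l)%N ->
  exists2 M, in_Dp p M & iter p (@adx k n) M = mulop n ('X^l * g).
Proof.
move=> lep; have [d Ed] := iter_adx_onto_xmulX l.
exists (mulop n g * iter (2 * l - p) (@adx k n) d).
  apply/in_DpP; rewrite iter_adx_mull ?commr_xmul_mulop // -iterD.
  have -> : (p.+1 + (2 * l - p) = (2 * l).+1)%N by lia.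
  by rewrite iterS Ed adx_xmulX mulr0.
rewrite iter_adx_mull ?commr_xmul_mulop // -iterD mulop_XnM.
have -> : (p + (2 * l - p) = 2 * l)%N by lia.
by rewrite Ed.
Qed.

Lemma vp_is_ceil_half p l : (2 * l - 1 <= p <= 2 * l)%N -> vp_is k n p l.
Proof.
move=> /andP[lop hip] A; split=> [[M DpM <-]|[g ->]].
  exact: iter_adx_Dp_sub.
exact: iter_adx_Dp_sup.
Qed.

End TruncatedPolynomials.

Theorem lemma7 (k : fieldType) (n : nat) :
  [pchar k] =i pred0 -> (0 < n)%N ->
  forall l : nat, (1 <= l <= n)%N ->
    vp_is k n (2 * l - 1) l /\ vp_is k n (2 * l) l.
Proof.
move=> char0 _ l _.
by split; apply: vp_is_ceil_half => //; lia.
Qed.
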